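(* If $\{\mathcal{I}_j\}$ generates a SK (i.e. some protocol generates a SK), then $\mathsf{S}(\{\mathcal{I}_j\})\le\mathsf{S}_{\mathrm{L}}(\{\mathcal{I}_j\})\le\mathsf{M}^\star(\{\mathcal{I}_j\})$.
   Context: Network model: $n$ clients $c_1,\dots,c_n$, sets $\mathcal{I}_1,\dots,\mathcal{I}_n\subseteq[m]$ with $\bigcup_j\mathcal{I}_j=[m]$ (the family $\{\mathcal{I}_j\}$); messages $X_1,\dots,X_m$ i.i.d. uniform on a finite field $\mathbb{F}$ with $|\mathbb{F}|>n$; client $c_j$ holds $\{X_i:i\in\mathcal{I}_j\}$; $\underline{X}=(X_1,\dots,X_m)^T$. A protocol: in each of $t$ rounds one client broadcasts to all an element of $\mathbb{F}$ that is a function of its own messages, the round index, and all previous broadcasts; $\mathbf{T}(\underline{X})\in\mathbb{F}^t$ collects the broadcasts ($t$ = number of transmissions). Linear protocol: each broadcast is an $\mathbb{F}$-linear combination of the transmitter's messages, so $\mathbf{T}(\underline{X})=A\underline{X}$. A protocol generates a SK if there are functions $\mathsf{k}_j$ with $K=\mathsf{k}_1(\{X_i:i\in\mathcal{I}_1\},\mathbf{T}(\underline{X}))$ such that (i) $\mathsf{k}_j(\{X_i:i\in\mathcal{I}_j\},\mathbf{T}(\underline{X}))=K$ a.s. for all $j$; (ii) $K$ is uniform on $\mathbb{F}$; (iii) $I(K;\mathbf{T}(\underline{X}))=0$. $\mathsf{S}$ (resp. $\mathsf{S}_{\mathrm{L}}$) is the minimum number of transmissions of a protocol (resp. linear protocol)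 generating a SK ($\infty$ if none). $\mathsf{M}^\star(\{\mathcal{I}_j\})$ is the optimal value of the integer program: minimize $\sum_{j\in[n]}a_j$ over $a\in\mathbb{Z}^n$ subject to $\sum_{j\in\mathcal{S}}a_j\ge\left|\bigcap_{j\in[n]\setminus\mathcal{S}}\bar{\mathcal{I}}_j\right|$ for every nonempty proper subset $\mathcal{S}\subsetneq[n]$, where $\bar{\mathcal{I}}_j=(\bigcup_i\mathcal{I}_i)\setminus\mathcal{I}_j$. *)

From HB Require Import structures.
From mathcomp Require Import all_boot all_order all_algebra.
Set Implicit Arguments. Unset Strict Implicit. Unset Printing Implicit Defensive.
Import Order.TTheory GRing.Theory Num.Theory.

(* A realization of the messages X_1..X_m : an element of F^m.
   Since the X_i are i.i.d. uniform, probabilities are counting measures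
   over {ffun 'I_m -> F}. *)
Definition msg (F : finFieldType) (m : nat) := {ffun 'I_m -> F}.

(* Broadcast rule: f r prev x = element broadcast in round r (0-based),
   given the previous broadcasts prev and the message realization x. *)
Fixpoint trans (F : finFieldType) (m : nat)
    (f : nat -> seq F -> msg F m -> F) (x : msg F m) (r : nat) : seq F :=
  match r with
  | 0 => [::]
  | r'.+1 => let p := trans f x r' in rcons p (f r' p x)
  end.

Definition broadcast_local (F : finFieldType) (n m : nat)
    (I : 'I_n -> {set 'I_m}) (sched : nat -> 'I_n)
    (f : nat -> seq F -> msg F m -> F) : Prop :=
  forall r p (x x' : msg F m),
    (forall i, i \in I (sched r) -> x i = x' i) -> f r p x = f r p x'.

(* The protocol with t transmissions (transcript T(x) = trans f x t)
   generates a secret key: (i) all clients recover K, (ii) K uniform on F,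
   (iii) I(K;T) = 0, i.e. K and T independent. *)
Definition generates_SK (F : finFieldType) (n m : nat)
    (I : 'I_n -> {set 'I_m}) (t : nat)
    (f : nat -> seq F -> msg F m -> F) : Prop :=
  exists (k : 'I_n -> msg F m -> seq F -> F) (K : msg F m -> F),
    (forall j (x x' : msg F m) s,
        (forall i, i \in I j -> x i = x' i) -> k j x s = k j x' s) /\
    (forall j x, k j x (trans f x t) = K x) /\
    (forall c : F, (#|[set x : msg F m | K x == c]| * #|F|
                    = #|[set: msg F m]|)%N) /\
    (forall (c : F) (s : seq F),
        (#|[set x : msg F m | (K x == c) && (trans f x t == s)]|
           * #|[set: msg F m]|
         = #|[set x : msg F m | K x == c]|
           * #|[set x : msg F m | trans f x t == s]|)%N).

Definition SK_protocol (F : finFieldType) (n m : nat)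
    (I : 'I_n -> {set 'I_m}) (t : nat) : Prop :=
  exists (sched : nat -> 'I_n) (f : nat -> seq F -> msg F m -> F),
    broadcast_local I sched f /\ generates_SK I t f.

Definition SK_linear (F : finFieldType) (n m : nat)
    (I : 'I_n -> {set 'I_m}) (t : nat) : Prop :=
  exists (sched : nat -> 'I_n) (coef : nat -> 'I_m -> F),
    (forall r i, (coef r i != 0)%R -> i \in I (sched r)) /\
    generates_SK I t (fun r _ x => (\sum_(i < m) coef r i * x i)%R).

Definition is_min (P : nat -> Prop) (k : nat) : Prop :=
  P k /\ forall k', P k' -> (k <= k')%N.

Definition Ibar (n m : nat) (I : 'I_n -> {set 'I_m}) (j : 'I_n) : {set 'I_m} :=
  (\bigcup_(i < n) I i) :\: I j.

Definition IP_feasible (n m : nat) (I : 'I_n -> {set 'I_m})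
    (a : 'I_n -> int) : Prop :=
  forall S : {set 'I_n}, S != set0 -> S != setT ->
    ((#|\bigcap_(j in ~: S) Ibar I j|%:Z) <= \sum_(j in S) a j)%R.

Definition Mstar_is (n m : nat) (I : 'I_n -> {set 'I_m}) (M : int) : Prop :=
  (exists a, IP_feasible I a /\ (\sum_(j < n) a j)%R = M) /\
  (forall a, IP_feasible I a -> (M <= \sum_(j < n) a j)%R).

(* The bound S <= S_L holds because a linear protocol is a protocol.  For
   S_L <= M*, first note that a SK forces every cut of the clients to be
   crossed by a shared message: otherwise mixing the messages of the two
   sides of the cut leaves the transcript unchanged, so K would be a function
   of the transcript, contradicting its uniformity and independence.  Hence a
   breadth-first search through shared messages builds a chain
   X_{e_0}, X_{e_1}, ..., X_{e_t} in which every e_r (r > 0) is held by a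
   client together with an earlier e_(p r), and which reaches all clients.
   Broadcasting the t differences X_{e_r} - X_{e_(p r)} is a linear protocol
   generating the key X_{e_0}: it is uniform and independent of the
   transcript because adding a constant to all messages shifts the key and
   fixes the transcript.  Stopping the search as soon as the last client j is
   reached, the messages e_0, ..., e_(t-1) are distinct and unknown to j, so
   t <= |Ibar_j|, and the constraint of the integer program for the cut
   [n] \ {j} gives |Ibar_j| <= M*. *)

From HB Require Import structures.
From mathcomp Require Import all_boot all_order all_algebra.
From mathcomp Require Import zify ring.
From Stdlib Require Import Classical.
Import Order.TTheory GRing.Theory Num.Theory.

Lemma exists_is_min {P : nat -> Prop} : (exists k, P k) -> exists k, is_min P k.
Proof.
move=> [k Pk]; elim/ltn_ind: k Pk => k IH Pk.
case: (classic (exists2 k', P k' & k' < k)) => [[k' Pk' lt_k'k]|no_smaller].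
  exact: IH lt_k'k Pk'.
exists k; split=> // k' Pk'; rewrite leqNgt; apply/negP => lt_k'k.
by apply: no_smaller; exists k'.
Qed.

Lemma set1_neqT {n : nat} (j : 'I_n) : 1 < n -> [set j] != setT.
Proof.
move=> n_gt1; apply/eqP => /(congr1 (fun A : {set 'I_n} => #|A|)).
by rewrite cards1 cardsT card_ord => n1; rewrite -n1 in n_gt1.
Qed.

Lemma exists_notin {T : finType} {A : {set T}} : A != setT -> exists b, b \notin A.
Proof. by rewrite -subTset => /subsetPn [b _ bA]; exists b. Qed.

Section Transcripts.
Context {F : finFieldType} {m : nat}.
Implicit Types (f : nat -> seq F -> msg F m -> F) (x y : msg F m).

Lemma size_trans f x t : size (trans f x t) = t.
Proof. by elim: t => //= t IH; rewrite size_rcons IH. Qed.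

Lemma nth_trans f x t r d : r < t -> nth d (trans f x t) r = f r (trans f x r) x.
Proof.
elim: t => // t IH; rewrite ltnS leq_eqVlt => /orP [/eqP -> | lt_rt] /=.
  by rewrite nth_rcons size_trans ltnn eqxx.
by rewrite nth_rcons size_trans lt_rt IH.
Qed.

Lemma trans_ext f x y t : (forall r p, f r p x = f r p y) -> trans f x t = trans f y t.
Proof. by move=> fxy; elim: t => //= t ->; rewrite fxy. Qed.

End Transcripts.

Definition cut_connected {n m : nat} (I : 'I_n -> {set 'I_m}) : Prop :=
  forall A : {set 'I_n}, A != set0 -> A != setT ->
  exists i, (exists2 a, a \in A & i \in I a) /\ (exists2 b, b \notin A & i \in I b).

Lemma uniform_indep_key_undetermined {X F : finType} {Y : eqType}
    {K : X -> F} {T : X -> Y} (x0 : X) :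
  1 < #|F| ->
  (forall c, #|[set x | K x == c]| * #|F| = #|[set: X]|) ->
  (forall c s, #|[set x | (K x == c) && (T x == s)]| * #|[set: X]|
               = #|[set x | K x == c]| * #|[set x | T x == s]|) ->
  ~ (forall x y, T x = T y -> K x = K y).
Proof.
move=> F_gt1 K_unif K_indep KT.
have fiberT : [set x | (K x == K x0) && (T x == T x0)] = [set x | T x == T x0].
  apply/setP => x; rewrite !inE.
  by have [/KT -> | _] := eqVneq (T x) (T x0); rewrite ?eqxx ?andbF.
have := K_indep (K x0) (T x0); rewrite fiberT.
have := K_unif (K x0).
have : 0 < #|[set x | T x == T x0]| by apply/card_gt0P; exists x0; rewrite inE.
have : 0 < #|[set x | K x == K x0]| by apply/card_gt0P; exists x0; rewrite inE.
nia.
Qed.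

Definition mix_msg {F : finFieldType} {m : nat} (side : pred 'I_m)
    (x y : msg F m) : msg F m :=
  [ffun i => if side i then x i else y i].

Lemma trans_mix {F : finFieldType} {n m : nat} {I : 'I_n -> {set 'I_m}}
    {sched : nat -> 'I_n} {f : nat -> seq F -> msg F m -> F} {side : pred 'I_m} :
  broadcast_local I sched f ->
  (forall j, {subset I j <= side} \/ {subset I j <= predC side}) ->
  forall r x y, trans f x r = trans f y r -> trans f (mix_msg side x y) r = trans f x r.
Proof.
move=> loc one_side; elim=> // r IH x y /= /eqP.
rewrite eqseq_rcons => /andP [/eqP Txy /eqP fxy]; rewrite IH //; congr rcons.
have [in_side | out_side] := one_side (sched r).
  by apply: loc => i /in_side; rewrite ffunE unfold_in => ->.
by rewrite fxy Txy; apply: loc => i /out_side; rewrite inE ffunE => /negbTE ->.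
Qed.

Lemma SK_protocol_cut_connected {F : finFieldType} {n m : nat}
    {I : 'I_n -> {set 'I_m}} {t : nat} :
  1 < #|F| -> SK_protocol F I t -> cut_connected I.
Proof.
move=> F_gt1 [sched [f [loc [k [K [k_loc [k_dec [K_unif K_indep]]]]]]]] A A0 AT.
apply: NNPP => no_cross.
pose side i := [exists a in A, i \in I a].
have side_in a : a \in A -> {subset I a <= side}.
  by move=> aA i ia; apply/existsP; exists a; rewrite aA.
have side_out b : b \notin A -> {subset I b <= predC side}.
  move=> bA i ib; rewrite inE; apply/existsP => -[a /andP [aA ia]].
  by apply: no_cross; exists i; split; [exists a | exists b].
have one_side j : {subset I j <= side} \/ {subset I j <= predC side}.
  by case: (boolP (j \in A)) => jA; [left; apply: side_in | right; apply: side_out].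
clearbody side.
have [a aA] := set0Pn _ A0; have [b bA] := exists_notin AT.
pose T x := trans f x t.
apply: (uniform_indep_key_undetermined (T := T) [ffun=> 0%R] F_gt1 K_unif K_indep).
move=> x y Txy; have Tmix := trans_mix loc one_side t x y Txy.
have Kmix_x : K (mix_msg side x y) = K x.
  rewrite -(k_dec a x) -(k_dec a) Tmix; apply: k_loc => i /(side_in a aA).
  by rewrite ffunE unfold_in => ->.
have Kmix_y : K (mix_msg side x y) = K y.
  rewrite -(k_dec b y) -(k_dec b) Tmix -/(T x) Txy.
  by apply: k_loc => i /(side_out b bA); rewrite inE ffunE => /negbTE ->.
by rewrite -Kmix_x Kmix_y.
Qed.

Section RelayChains.
Context {n m : nat} (I : 'I_n -> {set 'I_m}).

Definition relay_chain t (e : nat -> 'I_m) (p : nat -> nat) (c : nat -> 'I_n) :=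
  forall r, 0 < r <= t -> [/\ p r < r, e r \in I (c r) & e (p r) \in I (c r)].

Definition chain_clients t (e : nat -> 'I_m) : {set 'I_n} :=
  [set j | [exists r : 'I_t.+1, e r \in I j]].

Definition reaches_first t (e : nat -> 'I_m) j :=
  [/\ forall r, r < t -> e r \notin I j, e t \in I j &
      forall r1 r2, r1 <= t -> r2 <= t -> e r1 = e r2 -> r1 = r2].

Definition extend_at {T : Type} t (f : nat -> T) (v : T) r := if r <= t then f r else v.

Lemma extend_at_old {T : Type} t (f : nat -> T) v r : r <= t -> extend_at t f v r = f r.
Proof. by rewrite /extend_at => ->. Qed.

Lemma extend_at_last {T : Type} t (f : nat -> T) v : extend_at t f v t.+1 = v.
Proof. by rewrite /extend_at ltnn. Qed.

Lemma relay_chain_extend_at t e p c i a (r0 : 'I_t.+1) :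
  relay_chain t e p c -> e r0 \in I a -> i \in I a ->
  relay_chain t.+1 (extend_at t e i) (extend_at t p (val r0)) (extend_at t c a).
Proof.
move=> chain e_r0_a ia r /andP [r_gt0 le_r_t1].
have [le_rt | lt_tr] := leqP r t.
  have [lt_pr e_r_c e_pr_c] := chain r (introT andP (conj r_gt0 le_rt)).
  have le_prt : p r <= t by apply: ltnW (leq_trans lt_pr le_rt).
  by rewrite !extend_at_old.
have -> : r = t.+1 by apply/eqP; rewrite eqn_leq le_r_t1 lt_tr.
have le_r0t : val r0 <= t by rewrite -ltnS ltn_ord.
by rewrite !extend_at_last extend_at_old.
Qed.

Lemma relay_chain_extend {t e p c j} :
  cut_connected I -> relay_chain t e p c -> reaches_first t e j ->
  chain_clients t e != setT ->
  exists e' p' c' j', [/\ relay_chain t.+1 e' p' c', reaches_first t.+1 e' j' &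
                          chain_clients t e \proper chain_clients t.+1 e'].
Proof.
move=> conn chain [_ e_t_j e_inj] notT.
have j_in : j \in chain_clients t e by rewrite inE; apply/existsP; exists ord_max.
have nonempty : chain_clients t e != set0 by apply/set0Pn; exists j.
have [i [[a a_in ia] [b b_out ib]]] := conn _ nonempty notT.
have [r0 e_r0_a] : exists r0 : 'I_t.+1, e r0 \in I a by move: a_in; rewrite inE => /existsP.
have e_notin_b r : r <= t -> e r \notin I b.
  move=> le_rt; apply: contra b_out => e_r_b; rewrite inE; apply/existsP.
  by exists (Ordinal (le_rt : r < t.+1)).
exists (extend_at t e i), (extend_at t p (val r0)), (extend_at t c a), b; split.
- exact: relay_chain_extend_at.
- split.
  + by move=> r; rewrite ltnS => le_rt; rewrite extend_at_old // e_notin_b.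
  + by rewrite extend_at_last.
  + move=> r1 r2 le1 le2; rewrite /extend_at.
    case: leqP => le_r1t; case: leqP => le_r2t //; first exact: e_inj.
    * by move=> e_r1_i; have := e_notin_b r1 le_r1t; rewrite e_r1_i ib.
    * by move=> e_r2_i; have := e_notin_b r2 le_r2t; rewrite -e_r2_i ib.
    * by move=> _; lia.
- apply/properP; split.
    apply/subsetP => k; rewrite !inE => /existsP [r e_r_k]; apply/existsP.
    by exists (widen_ord (leqnSn _) r); rewrite /= extend_at_old // -ltnS.
  by exists b => //; rewrite inE; apply/existsP; exists ord_max; rewrite /= extend_at_last.
Qed.

Lemma exists_spanning_chain :
  1 < n -> cut_connected I ->
  exists t e p c j,
    [/\ relay_chain t e p c, reaches_first t e j & chain_clients t e = setT].
Proof.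
move=> n_gt1 conn.
suff grow k : k <= n -> exists t e p c j,
    [/\ relay_chain t e p c, reaches_first t e j & k <= #|chain_clients t e|].
  have [t [e [p [c [j [chain first big]]]]]] := grow n (leqnn n).
  exists t, e, p, c, j; split=> //; apply/eqP.
  by rewrite eqEcard subsetT cardsT card_ord.
elim: k => [_ | k IH lt_kn].
  pose j0 := Ordinal (ltnW n_gt1).
  have j0_nonempty : [set j0] != set0 by apply/set0Pn; exists j0; rewrite set11.
  have [i0 [[c0 _ i0_c0] _]] := conn [set j0] j0_nonempty (set1_neqT j0 n_gt1).
  exists 0, (fun=> i0), (fun=> 0), (fun=> c0), c0; split.
  - by case=> [|r] /andP [].
  - by split=> // r1 r2; rewrite !leqn0 => /eqP -> /eqP ->.
  - by [].
have [t [e [p [c [j [chain first le_k]]]]]] := IH (ltnW lt_kn).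
have [allT | notT] := eqVneq (chain_clients t e) setT.
  by exists t, e, p, c, j; split=> //; rewrite allT cardsT card_ord.
have [e' [p' [c' [j' [chain' first' grows]]]]] :=
  relay_chain_extend conn chain first notT.
exists t.+1, e', p', c', j'; split=> //.
exact: leq_ltn_trans le_k (proper_card grows).
Qed.

Lemma reaches_first_le_Ibar {t e j} :
  \bigcup_(k < n) I k = setT -> reaches_first t e j -> t <= #|Ibar I j|.
Proof.
move=> cover [e_out _ e_inj].
have inj : injective (fun r : 'I_t => e r).
  by move=> r1 r2 /(e_inj _ _ (ltnW (ltn_ord r1)) (ltnW (ltn_ord r2))) /val_inj.
rewrite -[t in t <= _]card_ord -(card_imset _ inj); apply: subset_leq_card.
apply/subsetP => _ /imsetP [r _ ->]; rewrite /Ibar cover !inE andbT.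
exact: e_out.
Qed.

End RelayChains.

Section RelayProtocol.
Context {F : finFieldType} {n m : nat} (I : 'I_n -> {set 'I_m}).
Local Open Scope ring_scope.

Definition shift_msg (d : F) (x : msg F m) : msg F m := [ffun i => x i + d].

Lemma shift_msg_inj d : injective (shift_msg d).
Proof.
by move=> x y /ffunP xy; apply/ffunP => i; have := xy i; rewrite !ffunE => /addIr.
Qed.

Lemma card_key_fiber_shift (K : msg F m -> F) (Q : pred (msg F m)) c :
  (forall d x, Q (shift_msg d x) = Q x) -> (forall d x, K (shift_msg d x) = K x + d) ->
  (#|[set x | (K x == c) && Q x]| * #|F| = #|[set x | Q x]|)%N.
Proof.
move=> Q_shift K_shift.
have fiber_const c' : #|[set x | (K x == c') && Q x]| = #|[set x | (K x == c) && Q x]|.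
  rewrite -(card_preimset _ (@shift_msg_inj (c' - c))); apply: eq_card => x.
  rewrite !inE Q_shift K_shift; congr (_ && _).
  apply/eqP/eqP => [shifted | ->]; last by ring.
  by rewrite -(addrK (c' - c) (K x)) shifted; ring.
have -> : #|[set x | Q x]| = (\sum_(c' : F) #|[set x | (K x == c') && Q x]|)%N.
  rewrite -sum1_card (partition_big K predT) //=; apply: eq_bigr => c' _.
  by rewrite -sum1_card; apply: eq_bigl => x; rewrite !inE andbC.
by rewrite (eq_bigr _ (fun c' _ => fiber_const c')) sum_nat_const mulnC.
Qed.

Lemma shift_key_uniform_indep (K : msg F m -> F) (T : msg F m -> seq F) :
  (forall d x, T (shift_msg d x) = T x) -> (forall d x, K (shift_msg d x) = K x + d) ->
  (forall c, #|[set x | K x == c]| * #|F| = #|[set: msg F m]|)%N /\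
  (forall c s, #|[set x | (K x == c) && (T x == s)]| * #|[set: msg F m]|
               = #|[set x | K x == c]| * #|[set x | T x == s]|)%N.
Proof.
move=> T_shift K_shift.
have K_unif c : (#|[set x | K x == c]| * #|F| = #|[set: msg F m]|)%N.
  have := @card_key_fiber_shift K predT c (fun _ _ => erefl) K_shift.
  rewrite (eq_card (B := [set x | K x == c])) => [-> | x]; last by rewrite !inE andbT.
  by apply: eq_card => x; rewrite !inE.
split=> // c s.
rewrite -(K_unif c) -(@card_key_fiber_shift K (fun x => T x == s) c) //; first by rewrite mulnCA.
by move=> d x; rewrite T_shift.
Qed.

(* Transcript entry r is x (e r.+1) - x (e (p r.+1)); summing the entries
   along the parent path of r back to 0 gives x (e r) - x (e 0).  The path
   is shorter than r because p r < r, so fuel r suffices. *)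
Fixpoint relay_offset (p : nat -> nat) (s : seq F) (fuel r : nat) : F :=
  match fuel, r with
  | fuel'.+1, r'.+1 => nth 0 s r' + relay_offset p s fuel' (p r)
  | _, _ => 0
  end.

Definition relay_coef t (e : nat -> 'I_m) (p : nat -> nat) r (i : 'I_m) : F :=
  if (r < t)%N then (i == e r.+1)%:R - (i == e (p r.+1))%:R else 0.

Definition relay_broadcast t e p r (_ : seq F) (x : msg F m) : F :=
  \sum_(i < m) relay_coef t e p r i * x i.

Lemma relay_broadcastE t e p r s x :
  relay_broadcast t e p r s x = if (r < t)%N then x (e r.+1) - x (e (p r.+1)) else 0.
Proof.
have pick_entry (a : 'I_m) : \sum_(i < m) (i == a)%:R * x i = x a.
  rewrite (bigD1 a) //= eqxx mul1r big1 ?addr0 // => i /negbTE ->.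
  by rewrite mul0r.
rewrite /relay_broadcast /relay_coef; case: ifP => _.
  by under eq_bigr do rewrite mulrBl; rewrite sumrB !pick_entry.
by rewrite big1 // => i _; rewrite mul0r.
Qed.

Lemma relay_offset_trans {t e p c} x fuel r :
  relay_chain I t e p c -> (r <= fuel)%N -> (r <= t)%N ->
  relay_offset p (trans (relay_broadcast t e p) x t) fuel r = x (e r) - x (e 0%N).
Proof.
move=> chain; elim: fuel r => [|fuel IH] [|r] //=; rewrite ?subrr // ltnS => le_r le_rt.
have [lt_pr _ _] := chain r.+1 le_rt.
have [le_p_fuel le_p_t] : (p r.+1 <= fuel)%N /\ (p r.+1 <= t)%N by lia.
by rewrite IH // nth_trans // relay_broadcastE le_rt; ring.
Qed.

Lemma relay_SK_linear {t e p c} :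
  relay_chain I t e p c -> chain_clients I t e = setT -> SK_linear F I t.
Proof.
move=> chain spanning.
pose q j := odflt ord0 [pick r : 'I_t.+1 | e r \in I j].
have e_q j : e (q j) \in I j.
  rewrite /q; case: pickP => [r // | none].
  by have := in_setT j; rewrite -spanning inE => /existsP [r]; rewrite none.
exists (fun r => c r.+1), (relay_coef t e p); split.
  move=> r i; rewrite /relay_coef; case: ltnP => [lt_rt | _]; last by rewrite eqxx.
  have [_ e_r c_pr] := chain r.+1 lt_rt.
  have [-> _ // | _] := eqVneq i (e r.+1).
  have [-> _ // | _] := eqVneq i (e (p r.+1)).
  by rewrite subrr eqxx.
pose T x := trans (relay_broadcast t e p) x t.
have T_shift d x : T (shift_msg d x) = T x.
  by apply: trans_ext => r s; rewrite !relay_broadcastE !ffunE; case: ifP => // _; ring.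
have K_shift d (x : msg F m) : shift_msg d x (e 0%N) = x (e 0%N) + d by rewrite ffunE.
have [K_unif K_indep] := shift_key_uniform_indep (fun x => x (e 0%N)) T T_shift K_shift.
exists (fun j x s => x (e (q j)) - relay_offset p s (q j) (q j)), (fun x => x (e 0%N)).
split; first by move=> j x x' s xx'; rewrite xx' // e_q.
split; last by [].
move=> j x; have le_qt : (q j <= t)%N by rewrite -ltnS ltn_ord.
by rewrite (relay_offset_trans x _ _ chain) //; ring.
Qed.

Lemma SK_linear_SK_protocol t : SK_linear F I t -> SK_protocol F I t.
Proof.
move=> [sched [coef [coef_local SK]]]; exists sched; eexists; split; last exact: SK.
move=> r s x x' xx'; apply: eq_bigr => i _.
by have [-> | /coef_local /xx' ->] := eqVneq (coef r i) 0; rewrite ?mul0r.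
Qed.

End RelayProtocol.

Section IntegerProgram.
Context {n m : nat} (I : 'I_n -> {set 'I_m}).
Hypothesis n_gt1 : 1 < n.
Local Open Scope ring_scope.

Lemma IP_feasible_ge0 a j : IP_feasible I a -> 0 <= a j.
Proof.
move=> feas; have j_ne0 : [set j] != set0 by apply/set0Pn; exists j; rewrite inE.
have := feas [set j] j_ne0 (set1_neqT j n_gt1); rewrite big_set1.
exact: le_trans.
Qed.

Lemma IP_feasible_const : IP_feasible I (fun=> m%:Z).
Proof.
move=> S /set0Pn [j0 j0S] _; rewrite [X in _ <= X](bigD1 j0) //=.
apply: le_trans (_ : m%:Z <= m%:Z + _); last by rewrite lerDl sumr_ge0.
by rewrite lez_nat (leq_trans (max_card _)) ?card_ord.
Qed.

Lemma card_Ibar_le_feasible_sum a j : IP_feasible I a -> #|Ibar I j|%:Z <= \sum_(i < n) a i.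
Proof.
move=> feas; have [j' j'j] := exists_notin (set1_neqT j n_gt1).
have cj_ne0 : ~: [set j] != set0 by apply/set0Pn; exists j'; rewrite inE.
have cj_neT : ~: [set j] != setT by apply/eqP => /setP /(_ j); rewrite !inE eqxx.
have := feas _ cj_ne0 cj_neT; rewrite setCK big_set1 => /le_trans; apply.
rewrite [X in _ <= X](bigD1 j) //= ler_wpDl ?IP_feasible_ge0 //.
by rewrite le_eqVlt (eq_bigl (fun i => i != j)) ?eqxx // => i; rewrite !inE.
Qed.

Lemma exists_Mstar : exists M : int, Mstar_is I M.
Proof.
pose value k := exists a, IP_feasible I a /\ \sum_(i < n) a i = k%:Z.
have [k [[a [feas_a sum_a]] k_min]] : exists k, is_min value k.
  apply: exists_is_min; exists (absz (\sum_(i < n) m%:Z)), (fun=> m%:Z).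
  by split; [exact: IP_feasible_const | rewrite gez0_abs ?sumr_ge0].
exists k%:Z; split; first by exists a.
move=> b feas_b; have sum_ge0 : 0 <= \sum_(i < n) b i.
  by apply: sumr_ge0 => i _; apply: IP_feasible_ge0.
rewrite -(gez0_abs sum_ge0) lez_nat; apply: k_min; exists b.
by rewrite gez0_abs.
Qed.

End IntegerProgram.

Theorem lemma1 (F : finFieldType) (n m : nat) (I : 'I_n -> {set 'I_m}) :
  (2 <= n)%N -> (n < #|F|)%N ->
  \bigcup_(j < n) I j = [set: 'I_m] ->
  (exists t, @SK_protocol F n m I t) ->
  exists (S SL : nat) (M : int),
    is_min (@SK_protocol F n m I) S /\ is_min (@SK_linear F n m I) SL /\ Mstar_is I M /\
    (S <= SL)%N /\ (SL%:Z <= M)%R.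
Proof.
move=> n_gt1 n_lt_F cover [t0 SK0].
have conn := SK_protocol_cut_connected (ltn_trans n_gt1 n_lt_F) SK0.
have [t [e [p [c [j [chain first spanning]]]]]] := exists_spanning_chain I n_gt1 conn.
have linear : SK_linear F I t := relay_SK_linear I chain spanning.
have [S S_min] := exists_is_min (ex_intro _ t0 SK0).
have [SL SL_min] := exists_is_min (ex_intro _ t linear).
have [M M_opt] := exists_Mstar I n_gt1.
have [[a [feas_a sum_a]] _] := M_opt.
exists S, SL, M; do 3!split=> //; split.
  exact/S_min.2/SK_linear_SK_protocol/SL_min.1.
rewrite -sum_a; apply: (@le_trans _ _ (#|Ibar I j|%:Z)%R); last exact: card_Ibar_le_feasible_sum.
by rewrite lez_nat (leq_trans (SL_min.2 _ linear)) // (reaches_first_le_Ibar I cover first).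
Qed.
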